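(* Every finite nonempty left-cancellative semigroup (i.e. $ax=ay$ implies $x=y$) is $K$-thin.
   Context: For a finite nonempty semigroup $S$, the minimal ideal $K(S)$ is the intersection of all nonempty two-sided ideals of $S$. A Rees matrix semigroup $\mathcal{M}(H;I,J;p)$, for sets $I,J$, a group $H$ and a function $p\colon J\times I\to H$, is the set $I\times H\times J$ with product $(i,h,j)(i',h',j')=(i,h\,p(j,i')\,h',j')$. It is known that $K(S)$ is always isomorphic to such a Rees matrix semigroup with $H$ a finite group and $p$ normalized (i.e. $p(j_0,i)=e_H$ and $p(j,i_0)=e_H$ for some fixed $i_0\in I$, $j_0\in J$ and all $i,j$). $S$ is called $K$-thin if $K(S)$ has such a normalized Rees matrix structure with $|I|=1$ or $|J|=1$; equivalently, $K(S)$ is left-simple or right-simple. *)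

From mathcomp Require Import all_boot all_fingroup.
Set Implicit Arguments. Unset Strict Implicit. Unset Printing Implicit Defensive.
Local Open Scope group_scope.

Definition minimal_ideal (T : finType) (op : T -> T -> T) : {set T} :=
  [set x | [forall A : {set T},
     ([forall y, [forall a, (a \in A) ==> (op y a \in A) && (op a y \in A)]]
      && (A != set0)) ==> (x \in A)]].

Definition left_cancellative (T : Type) (op : T -> T -> T) : Prop :=
  forall a x y, op a x = op a y -> x = y.

Definition rees_mul (gT : finGroupType) (I J : Type) (p : J -> I -> gT)
    (u v : I * gT * J) : I * gT * J :=
  let: (i, h, j) := u in let: (i', h', j') := v in (i, h * p j i' * h', j').

Definition K_thin (T : finType) (op : T -> T -> T) : Prop :=
  let K := minimal_ideal op in
  exists (gT : finGroupType) (I J : finType) (p : J -> I -> gT)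
         (i0 : I) (j0 : J) (f : T -> I * gT * J),
    [/\ (forall i, p j0 i = 1) /\ (forall j, p j i0 = 1),
        (#|I| = 1)%N \/ (#|J| = 1)%N,
        {in K &, injective f},
        (forall y, exists2 x, x \in K & f x = y) &
        {in K &, forall x y, f (op x y) = rees_mul p (f x) (f y)}].

From mathcomp Require Import all_boot all_fingroup.

(* Left cancellation makes every left translation [x |-> a x] a permutation
   of the finite set S.  Hence [a S = S], so S has no proper right ideal and
   K(S) = S; moreover each a has a unique right unit [e_a] (with [a e_a = a]),
   which is idempotent, and [a |-> (L_a^-1, e_a)] identifies S with the Rees
   matrix semigroup M(G; 1, E; 1), where G is the group of left translations
   and E is the set of idempotents. *)

Set Implicit Arguments.
Unset Strict Implicit.
Unset Printing Implicit Defensive.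

Local Open Scope group_scope.

Section LeftCancellative.

Variables (T : finType) (op : T -> T -> T).
Hypotheses (opA : associative op) (lcanc : left_cancellative op).

Lemma mul_inj a : injective (op a).
Proof. by move=> x y; apply: lcanc. Qed.
Arguments mul_inj : clear implicits.

Definition ltrans (a : T) : {perm T} := perm (mul_inj a).

Lemma ltransE a x : ltrans a x = op a x.
Proof. by rewrite permE. Qed.

(* [permM] composes left to right, so left translations form an anti-homomorphism. *)
Lemma ltransM a b : ltrans (op a b) = ltrans b * ltrans a.
Proof. by apply/permP => x; rewrite permM !ltransE opA. Qed.

Lemma idem_mull e x : op e e = e -> op e x = x.
Proof. by move=> ee; apply: (mul_inj e); rewrite opA ee. Qed.

Lemma ltrans_idem e : op e e = e -> ltrans e = 1.
Proof. by move=> ee; apply/permP => x; rewrite ltransE perm1 idem_mull. Qed.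

Definition right_unit (a : T) : T := (ltrans a)^-1 a.

Lemma mul_right_unit a : op a (right_unit a) = a.
Proof. by rewrite -ltransE permKV. Qed.

Lemma right_unitP a e : op a e = a -> right_unit a = e.
Proof. by move=> ae; apply: (mul_inj a); rewrite mul_right_unit ae. Qed.

Lemma right_unit_idem a : op (right_unit a) (right_unit a) = right_unit a.
Proof. by apply: (mul_inj a); rewrite opA !mul_right_unit. Qed.

Lemma right_unit_mul a b : right_unit (op a b) = right_unit b.
Proof. by apply: right_unitP; rewrite -opA mul_right_unit. Qed.

Lemma right_unit_mulr c e : op e e = e -> right_unit (op c e) = e.
Proof. by move=> ee; apply: right_unitP; rewrite -opA ee. Qed.

Lemma ltrans_right_unit_inj a b :
  ltrans a = ltrans b -> right_unit a = right_unit b -> a = b.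
Proof.
by move=> Lab eab; rewrite -(mul_right_unit a) -(mul_right_unit b) -!ltransE Lab eab.
Qed.

Lemma mem_minimal_ideal x : x \in minimal_ideal op.
Proof.
rewrite inE; apply/forallP => A; apply/implyP => /andP[/forallP idealA].
case/set0Pn=> a aA; have /forallP/(_ a) := idealA ((ltrans a)^-1 x).
by rewrite aA /= => /andP[_]; rewrite -ltransE permKV.
Qed.

Definition idem := {e : T | op e e == e}.

Definition idem_of (a : T) : idem := exist _ (right_unit a) (introT eqP (right_unit_idem a)).

Variable x0 : T.

Definition ltrans_set : {set {perm T}} := [set ltrans a | a : T].

Lemma ltrans_group_set : group_set ltrans_set.
Proof.
apply/group_setP; split.
  by rewrite -(ltrans_idem (right_unit_idem x0)); apply: imset_f.
by move=> _ _ /imsetP[a _ ->] /imsetP[b _ ->]; rewrite -ltransM imset_f.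
Qed.

Canonical ltrans_group := Group ltrans_group_set.

Lemma ltrans_in_group a : ltrans a \in ltrans_group.
Proof. exact: imset_f. Qed.

Definition rees_coord (a : T) : unit * subg_of ltrans_group * idem :=
  (tt, subg ltrans_group (ltrans a)^-1, idem_of a).

Lemma sgval_ltransV a : sgval (subg ltrans_group (ltrans a)^-1) = (ltrans a)^-1.
Proof. by rewrite subgK // groupV ltrans_in_group. Qed.

Lemma rees_coord_inj : injective rees_coord.
Proof.
move=> a b [hab eab]; apply: ltrans_right_unit_inj eab.
by apply: invg_inj; rewrite -[LHS]sgval_ltransV -[RHS]sgval_ltransV hab.
Qed.

Lemma rees_coord_surj y : exists x, rees_coord x = y.
Proof.
case: y => [[[] g] [e idem_e]]; have ee : op e e = e := eqP idem_e.
have /imsetP[c _ gc] : (sgval g)^-1 \in ltrans_group by rewrite groupV subgP.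
exists (op c e); congr (_, _, _); apply: val_inj => /=.
  by rewrite sgval_ltransV ltransM ltrans_idem // mul1g -gc invgK.
exact: right_unit_mulr.
Qed.

Lemma rees_coordM a b :
  rees_coord (op a b) = rees_mul (fun _ _ => 1) (rees_coord a) (rees_coord b).
Proof.
rewrite /= mulg1; congr (_, _, _); apply: val_inj => /=.
  by rewrite !sgval_ltransV ltransM invMg.
exact: right_unit_mul.
Qed.

End LeftCancellative.

Theorem proposition7p10 (T : finType) (op : T -> T -> T)
  (assoc_op : associative op) (nonempty : exists x : T, True)
  (lcanc : left_cancellative op) :
  K_thin op.
Proof.
case: nonempty => x0 _.
exists (subg_of (ltrans_group assoc_op lcanc x0)), unit, (idem op),
  (fun _ _ => 1), tt, (idem_of assoc_op lcanc x0), (rees_coord assoc_op lcanc x0).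
split=> //.
- by left; rewrite card_unit.
- by move=> a b _ _; apply: rees_coord_inj.
- move=> y; have [x <-] := rees_coord_surj y.
  by exists x; first exact: mem_minimal_ideal.
- by move=> a b _ _; apply: rees_coordM.
Qed.
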